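(* Let $\mathcal H$ be a family of graphs. The following are equivalent: (i) there is a constant $c=c(\mathcal H)$ such that every connected $\mathcal H$-free graph $G$ has fewer than $c$ vertices of degree at least $2$; (ii) there is a positive integer $n$ such that $\mathcal H\le \{K_n,\ P_n,\ K_{1,n}^*,\ K_{2,n},\ K_2+nK_1,\ K_1+nK_2\}$.
   Context: All graphs are finite, simple, undirected. For graphs $H_1,H_2$, write $H_1\prec H_2$ if $H_2$ contains an induced subgraph isomorphic to $H_1$. A graph $G$ is $\mathcal H$-free if no $H\in\mathcal H$ satisfies $H\prec G$. For families $\mathcal H_1,\mathcal H_2$, write $\mathcal H_1\le\mathcal H_2$ if for every $H_2\in\mathcal H_2$ there is $H_1\in\mathcal H_1$ with $H_1\prec H_2$. $K_n$, $E_n$, $P_n$ are the complete graph, edgeless graph, and path on $n$ vertices; $K_{s,t}$ is the complete bipartite graph; $nG$ is the disjoint union of $n$ copies of $G$; $G_1+G_2$ is the join (disjoint union plus all edges between $V(G_1)$ and $V(G_2)$). $K_{1,n}^*$ is the graph obtained from the star $K_{1,n}$ by attaching a new pendant vertex to each leaf. *)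

From mathcomp Require Import all_boot.
Set Implicit Arguments. Unset Strict Implicit. Unset Printing Implicit Defensive.

Record graph := Graph {
  gn : nat;
  gadj : rel 'I_gn;
  gadj_sym : symmetric gadj;
  gadj_irr : irreflexive gadj }.

Definition mk_adj (n : nat) (f : nat -> nat -> bool) : rel 'I_n :=
  fun i j => (i != j) && (f i j || f j i).

Lemma mk_adj_sym n f : symmetric (@mk_adj n f).
Proof. by move=> i j; rewrite /mk_adj eq_sym orbC. Qed.

Lemma mk_adj_irr n f : irreflexive (@mk_adj n f).
Proof. by move=> i; rewrite /mk_adj eqxx. Qed.

Definition mkgraph (n : nat) (f : nat -> nat -> bool) : graph :=
  @Graph n (@mk_adj n f) (@mk_adj_sym n f) (@mk_adj_irr n f).

Definition induced (H1 H2 : graph) : Prop :=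
  exists f : 'I_(gn H1) -> 'I_(gn H2),
    injective f /\ forall x y, @gadj H2 (f x) (f y) = @gadj H1 x y.

Definition Hfree (H : graph -> Prop) (G : graph) : Prop :=
  forall F, H F -> ~ induced F G.

Definition famle (H1 H2 : graph -> Prop) : Prop :=
  forall G2, H2 G2 -> exists2 G1, H1 G1 & induced G1 G2.

Definition connected (G : graph) : Prop :=
  forall x y : 'I_(gn G), connect (@gadj G) x y.

Definition degree (G : graph) (x : 'I_(gn G)) : nat :=
  #|[set y | @gadj G x y]|.

Definition num_deg_ge2 (G : graph) : nat :=
  #|[set x : 'I_(gn G) | 1 < degree x]|.

Definition Kn (n : nat) : graph := mkgraph n (fun _ _ => true).
Definition Pn (n : nat) : graph := mkgraph n (fun i j => i.+1 == j).
(* K_{1,n}^* : center 0, leaves 1..n, pendant vertex i+n attached to leaf i *)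
Definition Kstar (n : nat) : graph :=
  mkgraph (n.*2.+1)
    (fun i j => ((i == 0) && (1 <= j <= n)) || ((1 <= i <= n) && (j == i + n))).
(* K_{2,n} : parts {0,1} and {2,...,n+1} *)
Definition K2n (n : nat) : graph :=
  mkgraph (n.+2) (fun i j => (i < 2) && (2 <= j)).
(* K_2 + nK_1 : vertices 0,1 adjacent to each other and to all of 2..n+1 *)
Definition K2_join_nK1 (n : nat) : graph :=
  mkgraph (n.+2) (fun i j => i < 2).
(* K_1 + nK_2 : vertex 0 universal, edges {2k+1, 2k+2} for k < n *)
Definition K1_join_nK2 (n : nat) : graph :=
  mkgraph (n.*2.+1)
    (fun i j => (i == 0) || ((0 < i) && (0 < j) && ((i.-1)./2 == (j.-1)./2))).

Definition six_family (n : nat) : graph -> Prop :=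
  fun G => G = Kn n \/ G = Pn n \/ G = Kstar n \/ G = K2n n \/
           G = K2_join_nK1 n \/ G = K1_join_nK2 n.

From mathcomp Require Import all_boot zify.
From Stdlib Require Import Classical.
Set Implicit Arguments. Unset Strict Implicit. Unset Printing Implicit Defensive.

(* For n = c + 3 each of the six graphs is connected and has at least c
   vertices of degree at least 2, so none of them is H-free.  Conversely, let
   G be connected with none of K_n, P_n, K_{1,n}^*, K_{2,n}, K_2+nK_1,
   K_1+nK_2 as an induced subgraph.  A geodesic of length n would be an
   induced P_n, so the ball of radius n around any vertex r is all of G.
   Four nested applications of Ramsey's theorem show that a vertex with many
   neighbours of degree at least 2 is the centre of an induced K_n, K_{2,n},
   K_2+nK_1, K_1+nK_2 or K_{1,n}^*.  Since every vertex of degree at least 2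
   at distance k+1 from r hangs off one at distance k, counting layer by layer
   bounds the number of such vertices by a function of n alone. *)

Definition clique (T : finType) (r : rel T) (B : {set T}) :=
  {in B &, forall x y, x != y -> r x y}.

Definition indep (T : finType) (r : rel T) := clique [rel x y | ~~ r x y].

Lemma clique_setU1 (T : finType) (r : rel T) x (B : {set T}) :
  symmetric r -> clique r B -> {in B, forall y, r x y} -> clique r (x |: B).
Proof.
move=> r_sym clB xB y z; rewrite !in_setU1.
case/predU1P=> [->|yB] /predU1P [->|zB]; rewrite ?eqxx //.
- by move=> _; apply: xB.
- by move=> _; rewrite r_sym; apply: xB.
- exact: clB.
Qed.

Lemma clique_subset (T : finType) (r : rel T) (A B : {set T}) :
  B \subset A -> clique r A -> clique r B.
Proof. by move=> /subsetP sBA clA x y /sBA xA /sBA yA; apply: clA. Qed.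

Lemma clique_grow (T : finType) (r : rel T) a x (A B : {set T}) :
  symmetric r -> x \in A -> B \subset (A :\ x) :&: [set y | r x y] ->
  #|B| = a -> clique r B ->
  exists2 B' : {set T}, B' \subset A & #|B'| = a.+1 /\ clique r B'.
Proof.
move=> r_sym xA sB cardB clB.
have inB y : y \in B -> [/\ y != x, y \in A & r x y].
  by move/(subsetP sB); rewrite !inE => /andP [/andP [] ? ?].
exists (x |: B); first by apply/subsetP=> y /setU1P [->|/inB []].
split; last by apply: clique_setU1 => // y /inB [].
by rewrite cardsU1 cardB; case: (boolP (x \in B)) => // /inB []; rewrite eqxx.
Qed.

Lemma ramsey (T : finType) (r : rel T) a b (A : {set T}) : symmetric r ->
  2 ^ (a + b) <= #|A| ->
  (exists2 B : {set T}, B \subset A & #|B| = a /\ clique r B) \/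
  (exists2 B : {set T}, B \subset A & #|B| = b /\ indep r B).
Proof.
have clique0 (s : rel T) (A' : {set T}) :
    exists2 B : {set T}, B \subset A' & #|B| = 0 /\ clique s B.
  by exists set0; rewrite ?sub0set ?cards0 //; split=> // x y; rewrite inE.
move=> r_sym; have nr_sym : symmetric [rel x y | ~~ r x y] by move=> x y /=; rewrite r_sym.
elim: a b A => [|a IHa] b A; first by left; apply: clique0.
elim: b A => [|b IHb] A hA; first by right; apply: clique0.
have [x xA] : exists x, x \in A.
  by apply/card_gt0P; apply: leq_trans hA; rewrite expn_gt0.
set N := (A :\ x) :&: [set y | r x y].
set M := (A :\ x) :&: [set y | ~~ r x y].
have sNA : N \subset A by rewrite subIset ?subD1set.
have sMA : M \subset A by rewrite subIset ?subD1set.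
have cardNM : #|N| + #|M| = #|A|.-1.
  have -> : M = (A :\ x) :\: [set y | r x y] by apply/setP => y; rewrite /M !inE andbC.
  by rewrite /N cardsID (cardsD1 x A) xA.
have [hN|hM] : 2 ^ (a + b.+1) <= #|N| \/ 2 ^ (a.+1 + b) <= #|M|.
  by move: hA; rewrite addSn addnS !expnS; lia.
- have [[B sB [cardB clB]]|[B sB hB]] := IHa b.+1 N hN.
    by left; apply: clique_grow sB cardB clB.
  by right; exists B => //; apply: subset_trans sB sNA.
- have [[B sB hB]|[B sB [cardB indB]]] := IHb M hM.
    by left; exists B => //; apply: subset_trans sB sMA.
  by right; apply: (clique_grow nr_sym xA) sB cardB indB.
Qed.

Definition ordsym m (r : rel 'I_m) : rel 'I_m :=
  fun x y => if x < y then r x y else r y x.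

Lemma ordsym_sym m (r : rel 'I_m) : symmetric (ordsym r).
Proof.
by move=> x y; rewrite /ordsym; case: ltngtP => // /val_inj ->.
Qed.

Lemma ordered_ramsey m (r : rel 'I_m) a b (A : {set 'I_m}) :
  2 ^ (a + b) <= #|A| ->
  (exists2 B : {set 'I_m}, B \subset A &
     #|B| = a /\ {in B &, forall x y : 'I_m, x < y -> r x y}) \/
  (exists2 B : {set 'I_m}, B \subset A &
     #|B| = b /\ {in B &, forall x y : 'I_m, x < y -> ~~ r x y}).
Proof.
have ordsymE (x y : 'I_m) : x < y -> ordsym r x y = r x y by rewrite /ordsym => ->.
have neq_lt (x y : 'I_m) : x < y -> x != y by apply: contraTneq => ->; rewrite ltnn.
case/(ramsey (@ordsym_sym m r)) => [[B sB [cardB clB]]|[B sB [cardB inB]]].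
  by left; exists B => //; split => // x y xB yB xy; rewrite -ordsymE // clB ?neq_lt.
right; exists B => //; split => // x y xB yB xy.
by rewrite -ordsymE //; apply: inB; rewrite ?neq_lt.
Qed.

Lemma induced_trans F G K : induced F G -> induced G K -> induced F K.
Proof.
move=> [f [f_inj f_adj]] [g [g_inj g_adj]]; exists (g \o f).
by split; [exact: inj_comp | move=> x y /=; rewrite g_adj f_adj].
Qed.

Lemma induced_mkgraph N f G (h : nat -> 'I_(gn G)) :
  (forall i j, i < N -> j < N -> h i = h j -> i = j) ->
  (forall i j, i < N -> j < N -> i != j -> gadj (h i) (h j) = f i j || f j i) ->
  induced (mkgraph N f) G.
Proof.
move=> h_inj h_adj; exists (fun x : 'I_N => h x); split.
  by move=> x y /(h_inj _ _ (ltn_ord x) (ltn_ord y)) /val_inj.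
move=> x y /=; rewrite /mk_adj; have [->|nxy] := eqVneq x y; first exact: gadj_irr.
by rewrite h_adj.
Qed.

Section EnumSet.

Variables (T : finType) (x0 : T) (B : {set T}).
Local Notation g := (nth x0 (enum B)).

Lemma nth_enum_mem i : i < #|B| -> g i \in B.
Proof. by move=> lt_iB; rewrite -mem_enum mem_nth // -cardE. Qed.

Lemma nth_enum_inj i j : i < #|B| -> j < #|B| -> g i = g j -> i = j.
Proof.
by move=> lt_iB lt_jB /eqP; rewrite nth_uniq ?enum_uniq // -?cardE // => /eqP.
Qed.

Lemma clique_nth_enum (r : rel T) i j : clique r B ->
  i < #|B| -> j < #|B| -> i != j -> r (g i) (g j).
Proof.
move=> clB lt_iB lt_jB nij; apply: clB; rewrite ?nth_enum_mem //.
by apply: contra nij => /eqP /nth_enum_inj -> //.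
Qed.

End EnumSet.

Lemma induced_Kn_clique G (B : {set 'I_(gn G)}) :
  clique (@gadj G) B -> induced (Kn #|B|) G.
Proof.
move=> clB; have [x0 _|B0] := pickP (mem B); last first.
  rewrite (eq_card0 B0); exists (ffun0 (card_ord 0)).
  by split=> [[]|[]].
apply: (@induced_mkgraph _ _ G (nth x0 (enum B))) => [i j|i j lt_iB lt_jB nij].
  exact: nth_enum_inj.
by rewrite orbT clique_nth_enum.
Qed.

Lemma induced_K2n_or_K2_join G (a b : 'I_(gn G)) (L : {set 'I_(gn G)}) :
  a != b -> a \notin L -> b \notin L -> indep (@gadj G) L ->
  {in L, forall y, gadj a y && gadj b y} ->
  induced (K2n #|L|) G \/ induced (K2_join_nK1 #|L|) G.
Proof.
move=> nab aL bL indL abL; set n := #|L|.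
pose g := nth a (enum L).
pose h i := match i with 0 => a | 1 => b | i.+2 => g i end.
have gL i : i < n -> g i \in L by apply: nth_enum_mem.
have g_neq_a i : i < n -> g i != a by move/gL; apply: contraTneq => ->.
have g_neq_b i : i < n -> g i != b by move/gL; apply: contraTneq => ->.
have h_inj i j : i < n.+2 -> j < n.+2 -> h i = h j -> i = j.
  case: i j => [|[|i]] [|[|j]] //= lt_i lt_j; try move/eqP.
  - by rewrite (negbTE nab).
  - by rewrite eq_sym (negbTE (g_neq_a _ _)).
  - by rewrite eq_sym (negbTE nab).
  - by rewrite eq_sym (negbTE (g_neq_b _ _)).
  - by rewrite (negbTE (g_neq_a _ _)).
  - by rewrite (negbTE (g_neq_b _ _)).
  - by move/eqP/(nth_enum_inj lt_i lt_j) ->.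
have h_adj i j : i < n.+2 -> j < n.+2 -> i != j ->
    gadj (h i) (h j) = if (i < 2) && (j < 2) then gadj a b else (i < 2) || (j < 2).
  case: i j => [|[|i]] [|[|j]] //= lt_i lt_j nij.
  - by case/andP: (abL _ (gL j lt_j)).
  - by rewrite gadj_sym.
  - by case/andP: (abL _ (gL j lt_j)).
  - by rewrite gadj_sym; case/andP: (abL _ (gL i lt_i)).
  - by rewrite gadj_sym; case/andP: (abL _ (gL i lt_i)).
  - by apply/negbTE; apply: (clique_nth_enum _ indL).
case hab : (gadj a b); [right|left]; apply: (@induced_mkgraph _ _ G h h_inj);
  by move=> i j lt_i lt_j nij; rewrite h_adj // hab; case: (ltnP i 2); case: (ltnP j 2).
Qed.

Definition label_lt n (x : option (nat * bool)) :=
  if x is Some (k, _) then k < n else true.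

(* Vertex labels of K_{1,n}^* and K_1+nK_2: [None] is the centre v,
   [Some (k, false)] the k-th vertex u of I and [Some (k, true)] its private
   neighbour w u; [beta] tells whether the centre sees the private neighbours. *)
Definition pair_adj (beta : bool) (x y : option (nat * bool)) : bool :=
  match x, y with
  | None, None => false
  | None, Some (_, s) | Some (_, s), None => if s then beta else true
  | Some (k, s), Some (l, t) => (k == l) && (s != t)
  end.

Section PrivateNeighbours.

Variables (G : graph) (v : 'I_(gn G)) (w : 'I_(gn G) -> 'I_(gn G)).
Variables (I : {set 'I_(gn G)}) (beta : bool).
Hypotheses (vI : v \notin I) (indI : indep (@gadj G) I).
Hypotheses (vIadj : {in I, forall u, gadj v u}) (wv : {in I, forall u, w u != v}).
Hypothesis wIadj : {in I &, forall u u', gadj (w u) u' = (u == u')}.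
Hypothesis indwI : {in I &, forall u u', u != u' -> ~~ gadj (w u) (w u')}.
Hypothesis vwadj : {in I, forall u, gadj v (w u) = beta}.

Local Notation g := (nth v (enum I)).

Definition pair_vertex (x : option (nat * bool)) : 'I_(gn G) :=
  if x is Some (k, s) then (if s then w (g k) else g k) else v.

Lemma nth_enum_wadj k l : k < #|I| -> l < #|I| -> gadj (w (g k)) (g l) = (k == l).
Proof.
move=> lt_k lt_l; rewrite wIadj ?nth_enum_mem //.
by apply/eqP/eqP=> [/(nth_enum_inj lt_k lt_l)|->].
Qed.

Lemma pair_vertex_adj x y : label_lt #|I| x -> label_lt #|I| y -> x != y ->
  gadj (pair_vertex x) (pair_vertex y) = pair_adj beta x y.
Proof.
have gI k : k < #|I| -> g k \in I by apply: nth_enum_mem.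
case: x y => [[k []]|] [[l []]|] //= lt_k lt_l nxy.
- rewrite andbF; apply/negbTE/indwI; rewrite ?gI //.
  by apply: contra nxy => /eqP/(nth_enum_inj lt_k lt_l) ->.
- by rewrite andbT nth_enum_wadj.
- by rewrite gadj_sym vwadj ?gI.
- by rewrite andbT gadj_sym nth_enum_wadj // eq_sym.
- rewrite andbF; apply/negbTE/(clique_nth_enum v indI lt_k lt_l).
  by apply: contra nxy => /eqP ->.
- by rewrite gadj_sym vIadj ?gI.
- by rewrite vwadj ?gI.
- by rewrite vIadj ?gI.
Qed.

Lemma pair_vertex_inj x y : label_lt #|I| x -> label_lt #|I| y ->
  pair_vertex x = pair_vertex y -> x = y.
Proof.
have gI k : k < #|I| -> g k \in I by apply: nth_enum_mem.
have g_neq_v k : k < #|I| -> g k != v by move/gI; apply: contraTneq => ->.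
have wg_neq_v k : k < #|I| -> w (g k) != v by move/gI/wv.
have g_neq_wg k l : k < #|I| -> l < #|I| -> g k != w (g l).
  move=> lt_k lt_l; apply/eqP=> e; have := nth_enum_wadj lt_l lt_l; rewrite eqxx -e.
  case: (eqVneq k l) => [->|nkl]; first by rewrite gadj_irr.
  by have /= /negbTE -> := clique_nth_enum v indI lt_k lt_l nkl.
case: x y => [[k []]|] [[l []]|] //= lt_k lt_l.
- move=> e; have := nth_enum_wadj lt_k lt_l.
  by rewrite e nth_enum_wadj // eqxx => /esym/eqP ->.
- by move/esym/eqP; rewrite (negbTE (g_neq_wg _ _ lt_l lt_k)).
- by move/eqP; rewrite (negbTE (wg_neq_v _ lt_k)).
- by move/eqP; rewrite (negbTE (g_neq_wg _ _ lt_k lt_l)).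
- by move/(nth_enum_inj lt_k lt_l) ->.
- by move/eqP; rewrite (negbTE (g_neq_v _ lt_k)).
- by move/esym/eqP; rewrite (negbTE (wg_neq_v _ lt_l)).
- by move/esym/eqP; rewrite (negbTE (g_neq_v _ lt_l)).
Qed.

Lemma induced_pair_labelled N f (lab : nat -> option (nat * bool)) :
  (forall i, i < N -> label_lt #|I| (lab i)) ->
  (forall i j, i < N -> j < N -> lab i = lab j -> i = j) ->
  (forall i j, i < N -> j < N -> i != j -> f i j || f j i = pair_adj beta (lab i) (lab j)) ->
  induced (mkgraph N f) G.
Proof.
move=> lab_ok lab_inj lab_adj.
apply: (@induced_mkgraph _ _ G (pair_vertex \o lab)) => i j lt_i lt_j.
  by move/pair_vertex_inj => /(_ (lab_ok _ lt_i) (lab_ok _ lt_j)) /lab_inj; apply.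
move=> nij; rewrite lab_adj // pair_vertex_adj ?lab_ok //.
by apply: contra nij => /eqP /lab_inj ->.
Qed.

End PrivateNeighbours.

Definition Kstar_label n i : option (nat * bool) :=
  if i == 0 then None else if i <= n then Some (i.-1, false) else Some (i - n.+1, true).

Lemma Kstar_label_lt n i : i < n.*2.+1 -> label_lt n (Kstar_label n i).
Proof.
move=> lt_i; rewrite /Kstar_label.
by case: (i =P 0) => ?; case: (leqP i n) => ? //=; lia.
Qed.

Lemma Kstar_label_inj n i j : i < n.*2.+1 -> j < n.*2.+1 ->
  Kstar_label n i = Kstar_label n j -> i = j.
Proof.
move=> lt_i lt_j; rewrite /Kstar_label.
case: (i =P 0) => ?; case: (j =P 0) => ?; case: (leqP i n) => ?; case: (leqP j n) => ? //=;
  try case; lia.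
Qed.

Lemma Kstar_label_adj n i j : i < n.*2.+1 -> j < n.*2.+1 -> i != j ->
  ((i == 0) && (1 <= j <= n)) || ((1 <= i <= n) && (j == i + n)) ||
  (((j == 0) && (1 <= i <= n)) || ((1 <= j <= n) && (i == j + n)))
  = pair_adj false (Kstar_label n i) (Kstar_label n j).
Proof.
move=> lt_i lt_j nij; rewrite /Kstar_label.
case: (i =P 0) => ?; case: (j =P 0) => ?; case: (leqP i n) => ?; case: (leqP j n) => ? /=; lia.
Qed.

Definition K1_join_label i : option (nat * bool) :=
  if i is i'.+1 then Some (i'./2, odd i') else None.

Lemma K1_join_label_inj i j : K1_join_label i = K1_join_label j -> i = j.
Proof.
case: i j => [|i] [|j] //= [e_half e_odd].
by rewrite -[i]odd_double_half -[j]odd_double_half e_half e_odd.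
Qed.

Lemma K1_join_label_adj i j : i != j ->
  (i == 0) || (0 < i) && (0 < j) && ((i.-1)./2 == (j.-1)./2) ||
  ((j == 0) || (0 < j) && (0 < i) && ((j.-1)./2 == (i.-1)./2))
  = pair_adj true (K1_join_label i) (K1_join_label j).
Proof.
case: i j => [|i] [|j] //= nij; first by case: odd.
  by case: odd.
rewrite [j./2 == _]eq_sym orbb; case: eqP => //= e_half.
apply/esym/negP => /eqP e_odd; move: nij.
by rewrite -[i]odd_double_half -[j]odd_double_half e_half e_odd eqxx.
Qed.

Lemma induced_Kstar_or_K1_join G (v : 'I_(gn G)) (w : 'I_(gn G) -> 'I_(gn G))
    (I : {set 'I_(gn G)}) (beta : bool) :
  v \notin I -> indep (@gadj G) I -> {in I, forall u, gadj v u} ->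
  {in I, forall u, w u != v} -> {in I &, forall u u', gadj (w u) u' = (u == u')} ->
  {in I &, forall u u', u != u' -> ~~ gadj (w u) (w u')} ->
  {in I, forall u, gadj v (w u) = beta} ->
  induced (if beta then K1_join_nK2 #|I| else Kstar #|I|) G.
Proof.
move=> vI indI vIadj wv wIadj indwI; case: beta => vwadj.
  apply: (induced_pair_labelled vI indI vIadj wv wIadj indwI vwadj
            (lab := K1_join_label)) => [[|i] /= lt_i|i j _ _|i j _ _].
  - by [].
  - by rewrite /= ltn_half_double.
  - exact: K1_join_label_inj.
  - exact: K1_join_label_adj.
apply: (induced_pair_labelled vI indI vIadj wv wIadj indwI vwadj
          (lab := Kstar_label #|I|)) => [i lt_i|i j|i j].
- exact: Kstar_label_lt.
- exact: (@Kstar_label_inj #|I|).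
- exact: Kstar_label_adj.
Qed.

Definition nonleaf_nbrs G (v : 'I_(gn G)) := [set u | gadj v u & 1 < degree u].

(* One exponential per Ramsey step in [card_nonleaf_nbrs_lt]. *)
Definition nbr_bound n := 2 ^ (n + 2 ^ (n.+1 + 2 ^ (n.+1 + 2 ^ (n + n).+1))).

Section SixFamilyFree.

Variables (G : graph) (n : nat).
Hypothesis G_free : Hfree (six_family n) G.

Lemma clique_card_neq (B : {set 'I_(gn G)}) : clique (@gadj G) B -> #|B| != n.
Proof.
move=> clB; apply/eqP=> cardB; apply: (G_free (or_introl (erefl (Kn n)))).
by rewrite -cardB; apply: induced_Kn_clique.
Qed.

Lemma common_nbrs_card_neq (a b : 'I_(gn G)) (L : {set 'I_(gn G)}) :
  a != b -> a \notin L -> b \notin L -> indep (@gadj G) L ->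
  {in L, forall y, gadj a y && gadj b y} -> #|L| != n.
Proof.
move=> nab aL bL indL abL; apply/eqP=> cardL.
have [|] := induced_K2n_or_K2_join nab aL bL indL abL; rewrite cardL.
  by apply: G_free; do 3 right; left.
by apply: G_free; do 4 right; left.
Qed.

Lemma private_nbrs_card_neq v (w : 'I_(gn G) -> 'I_(gn G)) (I : {set 'I_(gn G)}) beta :
  v \notin I -> indep (@gadj G) I -> {in I, forall u, gadj v u} ->
  {in I, forall u, w u != v} -> {in I &, forall u u', gadj (w u) u' = (u == u')} ->
  {in I &, forall u u', u != u' -> ~~ gadj (w u) (w u')} ->
  {in I, forall u, gadj v (w u) = beta} -> #|I| != n.
Proof.
move=> vI indI vIadj wv wIadj indwI vwadj; apply/eqP=> cardI.
have := induced_Kstar_or_K1_join vI indI vIadj wv wIadj indwI vwadj.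
by rewrite cardI; case: beta {vwadj}; apply: G_free; [do 5 right | do 2 right; left].
Qed.

End SixFamilyFree.

Section NonleafNeighbours.

Variables (G : graph) (n : nat) (v : 'I_(gn G)) (w : 'I_(gn G) -> 'I_(gn G)).
Hypothesis G_free : Hfree (six_family n) G.
Hypothesis w_nbr : {in nonleaf_nbrs v, forall u, gadj u (w u) && (w u != v)}.

Lemma notin_nonleaf_nbrs : v \notin nonleaf_nbrs v.
Proof. by rewrite inE gadj_irr. Qed.

Lemma private_nbr_notin (I : {set 'I_(gn G)}) : I \subset nonleaf_nbrs v ->
  indep (@gadj G) I -> {in I, forall u, w u \notin I}.
Proof.
move=> /subsetP sI indI u uI; apply/negP=> wuI.
have /andP [u_wu _] := w_nbr (sI u uI).
have: u != w u by apply: contraTneq u_wu => <-; rewrite gadj_irr.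
by move/(indI u (w u) uI wuI); rewrite /= u_wu.
Qed.

Lemma hub_card_neq (B : {set 'I_(gn G)}) x :
  B \subset nonleaf_nbrs v -> indep (@gadj G) B -> x \in B ->
  {in B, forall y, y != x -> gadj (w x) y} -> #|B| != n.+1.
Proof.
move=> sB indB xB wx_adj; have /subsetP sB' := sB.
have /andP [_ wx_neq_v] := w_nbr (sB' x xB).
rewrite (cardsD1 x) xB eqSS; apply: (common_nbrs_card_neq G_free (a := v) (b := w x)).
- by rewrite eq_sym.
- by apply: contra notin_nonleaf_nbrs => /setD1P [_ /sB'].
- by apply: contra (private_nbr_notin sB indB xB) => /setD1P [].
- exact: clique_subset (subD1set _ _) indB.
- move=> y /setD1P [nyx yB]; rewrite wx_adj // andbT.
  by move: (sB' y yB); rewrite inE => /andP [].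
Qed.

Lemma uniform_private_card_lt (A : {set 'I_(gn G)}) beta :
  A \subset nonleaf_nbrs v -> indep (@gadj G) A ->
  {in A &, forall u u', gadj (w u) u' = (u == u')} ->
  {in A, forall u, gadj v (w u) = beta} -> #|A| < 2 ^ (n + n).
Proof.
move=> /subsetP sA indA wAadj vwadj; rewrite ltnNge; apply/negP=> hA.
have w_inj : {in A &, injective w}.
  move=> u u' uA u'A e; apply/eqP; rewrite -wAadj // e.
  by rewrite gadj_sym; case/andP: (w_nbr (sA u' u'A)).
have ww_sym : symmetric (fun u u' => @gadj G (w u) (w u')) by move=> ? ?; apply: gadj_sym.
have [[B /subsetP sB [cardB clB]]|[B /subsetP sB [cardB indB]]] := ramsey ww_sym hA.
  have: clique (@gadj G) (w @: B).
    move=> _ _ /imsetP [u uB ->] /imsetP [u' u'B ->] nww.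
    by apply: clB => //; apply: contra nww => /eqP ->.
  move/(clique_card_neq G_free); rewrite card_in_imset ?cardB ?eqxx //.
  by move=> u u' /sB uA /sB u'A; apply: w_inj.
suff: #|B| != n by rewrite cardB eqxx.
apply: (private_nbrs_card_neq G_free (w := w) (beta := beta)).
- by apply/negP=> /sB /sA; apply/negP/notin_nonleaf_nbrs.
- by apply: clique_subset indA; apply/subsetP=> u /sB.
- by move=> u /sB /sA; rewrite inE => /andP [].
- by move=> u /sB /sA /w_nbr /andP [].
- by move=> u u' /sB uA /sB u'A; apply: wAadj.
- exact: indB.
- by move=> u /sB; apply: vwadj.
Qed.

Lemma private_card_lt (I : {set 'I_(gn G)}) :
  I \subset nonleaf_nbrs v -> indep (@gadj G) I ->
  {in I &, forall u u', gadj (w u) u' = (u == u')} -> #|I| < 2 ^ (n + n).+1.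
Proof.
move=> sI indI wIadj; set S := [set u | gadj v (w u)].
have part_lt beta (A : {set 'I_(gn G)}) : A \subset I ->
    {in A, forall u, gadj v (w u) = beta} -> #|A| < 2 ^ (n + n).
  move=> sAI; apply: uniform_private_card_lt; first exact: subset_trans sAI sI.
    exact: clique_subset sAI indI.
  by move=> u u' /(subsetP sAI) uI /(subsetP sAI) u'I; apply: wIadj.
rewrite -(cardsID S I) expnS mul2n -addnn -addSn; apply: leq_add; last apply: ltnW.
  by apply: (part_lt true); [exact: subsetIl | move=> u; rewrite !inE => /andP []].
by apply: (part_lt false); [exact: subsetDl | move=> u; rewrite !inE => /andP [/negbTE]].
Qed.

Lemma card_nonleaf_nbrs_lt : #|nonleaf_nbrs v| < nbr_bound n.
Proof.
rewrite ltnNge /nbr_bound; set s3 := 2 ^ (n + n).+1.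
set s2 := 2 ^ (n.+1 + s3); set s1 := 2 ^ (n.+1 + s2).
apply/negP=> hN.
have [[B _ [cardB clB]]|[I sI [cardI indI]]] := ramsey (@gadj_sym G) hN.
  by move: (clique_card_neq G_free clB); rewrite cardB eqxx.
(* Two ordered Ramsey steps shrink I until no [w u] sees another vertex of I;
   otherwise an ordered clique B makes [w x], for x the least (resp. greatest)
   element of B, a common neighbour of [B :\ x] besides v. *)
have {hN} hI : 2 ^ (n.+1 + s2) <= #|I| by rewrite cardI.
have [[B sB [cardB fclB]]|[I1 sI1 [cardI1 findI1]]] :=
  ordered_ramsey (fun u u' => @gadj G (w u) u') hI.
  have [x0 x0B] : exists x, x \in B by apply/card_gt0P; rewrite cardB.
  case: (arg_minnP val x0B) => x xB x_min.
  suff: #|B| != n.+1 by rewrite cardB eqxx.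
  apply: (hub_card_neq (subset_trans sB sI) (clique_subset sB indI) xB) => y yB nyx.
  by apply: fclB => //; rewrite ltn_neqAle val_eqE eq_sym nyx x_min.
have {hI} hI1 : 2 ^ (n.+1 + s3) <= #|I1| by rewrite cardI1.
have sI1' := subset_trans sI1 sI; have indI1 := clique_subset sI1 indI.
have [[B sB [cardB fclB]]|[I2 sI2 [cardI2 findI2]]] :=
  ordered_ramsey (fun u u' => @gadj G (w u') u) hI1.
  have [x0 x0B] : exists x, x \in B by apply/card_gt0P; rewrite cardB.
  case: (arg_maxnP val x0B) => x xB x_max.
  suff: #|B| != n.+1 by rewrite cardB eqxx.
  apply: (hub_card_neq (subset_trans sB sI1') (clique_subset sB indI1) xB) => y yB nyx.
  by apply: fclB => //; rewrite ltn_neqAle val_eqE nyx; apply: x_max.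
have /subsetP sI2I1 := sI2.
suff: #|I2| < s3 by rewrite cardI2 ltnn.
apply: (private_card_lt (subset_trans sI2 sI1') (clique_subset sI2 indI1)) => u u' uI2 u'I2.
have [<-|] := eqVneq u u'.
  by rewrite gadj_sym; case/andP: (w_nbr (subsetP sI1' u (sI2I1 u uI2))).
case: (ltngtP u u') => [lt_uu'|lt_u'u|/val_inj ->]; last by rewrite eqxx.
  by move=> _; apply/negbTE/findI1; rewrite ?sI2I1.
by move=> _; apply/negbTE/findI2.
Qed.

End NonleafNeighbours.

Lemma nonleaf_nbrs_lt G n (v : 'I_(gn G)) :
  Hfree (six_family n) G -> #|nonleaf_nbrs v| < nbr_bound n.
Proof.
move=> G_free; pose w u := odflt u [pick y | gadj u y && (y != v)].
apply: (card_nonleaf_nbrs_lt (w := w) G_free) => u; rewrite inE => /andP [_ deg_u].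
rewrite /w; case: pickP => [y //|no_other]; exfalso.
suff: degree u <= 1 by rewrite leqNgt deg_u.
rewrite -(cards1 v); apply/subset_leq_card/subsetP => y; rewrite !inE => uy.
by move: (no_other y); rewrite /= uy => /negbFE.
Qed.

Section Balls.

Variables (G : graph) (r : 'I_(gn G)).

Fixpoint ball k : {set 'I_(gn G)} :=
  if k is k'.+1 then ball k' :|: [set y | [exists z in ball k', gadj z y]] else [set r].

Lemma ball_center k : r \in ball k.
Proof. by elim: k => [|k IHk] /=; rewrite ?set11 // in_setU IHk. Qed.

Lemma ball_mono i j : i <= j -> ball i \subset ball j.
Proof.
move/subnKC <-; elim: (j - i) => [|d IHd]; first by rewrite addn0.
by rewrite addnS; apply: subset_trans IHd (subsetUl _ _).
Qed.

Lemma ball_nbr k z y : z \in ball k -> gadj z y -> y \in ball k.+1.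
Proof.
by move=> zk zy; rewrite /= in_setU inE; apply/orP; right; apply/existsP; exists z; rewrite zk.
Qed.

Lemma ball_parent k y : y \in ball k.+1 -> y \notin ball k ->
  exists2 z, z \in ball k & gadj z y.
Proof.
by rewrite /= in_setU inE => /orP [->//|/existsP [z /andP [zk zy]]] _; exists z.
Qed.

Lemma ball_pred_nbr k y : y \in ball k -> y != r -> exists2 z, gadj z y & z \in ball k.-1.
Proof.
elim: k y => [|k IHk] y; first by rewrite /= inE => ->.
have [yk _ nyr|yk yk1 _] := boolP (y \in ball k).
  have [z zy zk] := IHk y yk nyr; exists z => //.
  by apply: (subsetP (ball_mono (leq_pred k))).
by have [z zk zy] := ball_parent yk1 yk; exists z.
Qed.

Lemma geodesic k y : y \in ball k -> (0 < k -> y \notin ball k.-1) ->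
  exists h : nat -> 'I_(gn G), [/\ h k = y, forall i, i <= k -> h i \in ball i,
    forall i j, i < j <= k -> h j \notin ball i & forall i, i < k -> gadj (h i) (h i.+1)].
Proof.
elim: k y => [|k IHk] y yk far_y.
  exists (fun _ => y); split=> // [i|i j]; rewrite ?leqn0 //; first by move=> /eqP ->.
  lia.
have {}far_y := far_y isT; have [z zk zy] := ball_parent yk far_y.
have far_z : 0 < k -> z \notin ball k.-1.
  by move=> k_gt0; apply: contra far_y => /ball_nbr /(_ zy); rewrite prednK.
have [h [hk h_in h_far h_adj]] := IHk z zk far_z.
exists (fun i => if i == k.+1 then y else h i); split=> [|i|i j|i lt_ik]; rewrite ?eqxx //.
- by case: eqP => [-> //|/eqP ne_ik le_ik]; apply: h_in; lia.
- case: eqP => [-> lt_ik|/eqP ne_jk lt_ij]; last by apply: h_far; lia.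
  by apply: contra far_y => /(subsetP (ball_mono (_ : i <= k))); apply; lia.
- rewrite (_ : i == k.+1 = false); last lia.
  by case: eqP => [[->]|/eqP ne]; [rewrite hk | apply: h_adj; lia].
Qed.

End Balls.

Lemma induced_Pn_geodesic G (r : 'I_(gn G)) k y m : m <= k.+1 ->
  y \in ball r k -> (0 < k -> y \notin ball r k.-1) -> induced (Pn m) G.
Proof.
move=> le_mk yk far_y; have [h [_ h_in h_far h_adj]] := geodesic yk far_y.
have h_adjE i j : i < j <= k -> gadj (h i) (h j) = (i.+1 == j).
  move=> lt_ij; case: eqP => [<-|ne_ij]; first by apply: h_adj; lia.
  have far_j : h j \notin ball r i.+1 by apply: h_far; lia.
  by apply: contraNF far_j; apply: ball_nbr; apply: h_in; lia.
apply: (@induced_mkgraph _ _ G h) => i j lt_im lt_jm.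
  move=> e; case: (ltngtP i j) => // lt_ij.
    by move: (h_far i j); rewrite -e h_in //; lia.
  by move: (h_far j i); rewrite e h_in //; lia.
case: (ltngtP i j) => [lt_ij|lt_ji|->]; last by [].
  by rewrite h_adjE //; lia.
by rewrite gadj_sym h_adjE //; lia.
Qed.

Lemma degree_gt1 G (z a b : 'I_(gn G)) : gadj z a -> gadj z b -> a != b -> 1 < degree z.
Proof.
move=> za zb nab; apply: (@leq_trans #|[set a; b]|); first by rewrite cards2 nab.
apply/subset_leq_card/subsetP => y.
by rewrite !inE => /orP [] /eqP ->.
Qed.

Lemma nonleaf_of_outer_nbr G (r : 'I_(gn G)) k z y : 1 < degree r ->
  z \in ball r k -> gadj z y -> y \notin ball r k -> 1 < degree z.
Proof.
move=> deg_r zk zy far_y; have [->//|nzr] := eqVneq z r.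
have [z' z'z z'k] := ball_pred_nbr zk nzr.
apply: (degree_gt1 zy (_ : gadj z z')); first by rewrite gadj_sym.
by apply: contraNneq far_y => ->; apply: subsetP (ball_mono r (leq_pred k)) _ z'k.
Qed.

Lemma card_bigcup_leq (T I : finType) (S : {set I}) (F : I -> {set T}) m :
  {in S, forall i, #|F i| <= m} -> #|\bigcup_(i in S) F i| <= #|S| * m.
Proof.
move=> le_Fm; apply: (@leq_trans (\sum_(i in S) #|F i|)).
  apply: (big_rec2 (fun (A : {set T}) s => #|A| <= s)) => [|i A s _ le_As].
    by rewrite cards0.
  by apply: leq_trans (leq_card_setU _ _) _; rewrite leq_add2l.
by rewrite -sum_nat_const; apply: leq_sum.
Qed.

Section SixFamilyFreeConnected.

Variables (G : graph) (n : nat) (r : 'I_(gn G)).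
Hypotheses (G_free : Hfree (six_family n) G) (G_conn : connected G).

Lemma ball_stable : ball r n.+1 \subset ball r n.
Proof.
apply/subsetP => y yn1; apply/negPn/negP => far_y.
apply: (G_free (_ : six_family n (Pn n))); first by right; left.
by apply: (@induced_Pn_geodesic G r n.+1 y n) => //; lia.
Qed.

Lemma ball_full x : x \in ball r n.
Proof.
have ball_closed : closed (@gadj G) (mem (ball r n)).
  move=> a b ab; apply/idP/idP => [a_in|b_in].
    exact: subsetP ball_stable _ (ball_nbr a_in ab).
  by apply: subsetP ball_stable _ (ball_nbr b_in _); rewrite gadj_sym.
by rewrite -(closed_connect ball_closed (G_conn r x)) ball_center.
Qed.

Lemma card_ball_nonleaves k : 1 < degree r ->
  #|ball r k :&: [set x | 1 < degree x]| <= (nbr_bound n).+1 ^ k.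
Proof.
move=> deg_r; set NL := [set x | 1 < degree x].
elim: k => [|k IHk].
  by rewrite expn0 (leq_trans (subset_leq_card (subsetIl _ _))) ?cards1.
have sub : ball r k.+1 :&: NL \subset
    (ball r k :&: NL) :|: \bigcup_(z in ball r k :&: NL) nonleaf_nbrs z.
  apply/subsetP => y; rewrite in_setI => /andP [yk1 y_nl].
  have [yk|far_y] := boolP (y \in ball r k); first by rewrite in_setU in_setI yk y_nl.
  have [z zk zy] := ball_parent yk1 far_y.
  apply/setUP; right; apply/bigcupP; exists z.
    by rewrite in_setI zk inE (nonleaf_of_outer_nbr deg_r zk zy far_y).
  by rewrite inE zy; rewrite inE in y_nl.
apply: leq_trans (subset_leq_card sub) _; apply: leq_trans (leq_card_setU _ _) _.
apply: (@leq_trans (#|ball r k :&: NL| * (nbr_bound n).+1)).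
  rewrite mulnS leq_add2l; apply: card_bigcup_leq => z _.
  exact/ltnW/nonleaf_nbrs_lt.
by rewrite expnSr leq_mul2r IHk orbT.
Qed.

End SixFamilyFreeConnected.

Lemma num_deg_ge2_le G n : Hfree (six_family n) G -> connected G ->
  num_deg_ge2 G <= (nbr_bound n).+1 ^ n.
Proof.
move=> G_free G_conn; rewrite /num_deg_ge2.
have [r deg_r|no_nonleaf] := pickP (fun x : 'I_(gn G) => 1 < degree x); last first.
  by rewrite (_ : [set x | _] = set0) ?cards0 //; apply/setP => x; rewrite !inE no_nonleaf.
apply: leq_trans (card_ball_nonleaves G_free n deg_r).
by apply/subset_leq_card/subsetP => x x_nl; rewrite inE (ball_full r G_free G_conn) x_nl.
Qed.

Definition nat_adj (f : nat -> nat -> bool) (a b : nat) := (a != b) && (f a b || f b a).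

Lemma mkgraph_adjE N f (x y : 'I_N) : @gadj (mkgraph N f) x y = nat_adj f x y.
Proof. by []. Qed.

Lemma connected_of_root (G : graph) (x0 : 'I_(gn G)) :
  (forall x, connect (@gadj G) x0 x) -> connected G.
Proof.
move=> x0_conn x y; apply: connect_trans (x0_conn y).
by rewrite (sym_connect_sym (@gadj_sym G)).
Qed.

Lemma connected_mkgraph_radius2 N f (N_gt0 : 0 < N) :
  (forall x, x < N ->
     [\/ x = 0, nat_adj f 0 x | exists y, [/\ y < N, nat_adj f 0 y & nat_adj f y x]]) ->
  connected (mkgraph N f).
Proof.
move=> near0; apply: (@connected_of_root (mkgraph N f) (Ordinal N_gt0)) => x.
case: (near0 x (ltn_ord x)) => [x0|adj0x|[y [lt_yN adj0y adjyx]]].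
- by rewrite (_ : x = Ordinal N_gt0) ?connect0 //; apply: val_inj.
- exact: connect1.
- by apply: (connect_trans (y := Ordinal lt_yN)); apply: connect1.
Qed.

Lemma connected_Pn N : 0 < N -> connected (Pn N).
Proof.
move=> N_gt0; apply: (@connected_of_root (Pn N) (Ordinal N_gt0)) => -[x lt_xN].
elim: x lt_xN => [|x IHx] lt_xN.
  by rewrite (_ : Ordinal lt_xN = Ordinal N_gt0) ?connect0 //; apply: val_inj.
have lt_x'N : x < N := ltnW lt_xN.
apply: connect_trans (IHx lt_x'N) (connect1 _).
by rewrite mkgraph_adjE /nat_adj /=; lia.
Qed.

Lemma num_deg_ge2_mkgraph_ge N f c (g : nat -> nat) :
  (forall i, i < c -> g i < N) -> (forall i j, i < c -> j < c -> g i = g j -> i = j) ->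
  (forall i, i < c -> exists a b,
     [/\ a < N, b < N, a != b, nat_adj f (g i) a & nat_adj f (g i) b]) ->
  c <= num_deg_ge2 (mkgraph N f).
Proof.
move=> g_lt g_inj two_nbrs.
pose h (i : 'I_c) : 'I_N := Ordinal (g_lt i (ltn_ord i)).
have h_inj : injective h.
  by move=> i j /(congr1 val) /= /(g_inj _ _ (ltn_ord i) (ltn_ord j)) /val_inj.
rewrite -{1}(card_ord c) -(card_imset _ h_inj) /num_deg_ge2.
apply/subset_leq_card/subsetP => _ /imsetP [i _ ->]; rewrite inE.
have [a [b [lt_aN lt_bN nab adj_a adj_b]]] := two_nbrs i (ltn_ord i).
exact: (@degree_gt1 (mkgraph N f) (h i) (Ordinal lt_aN) (Ordinal lt_bN)).
Qed.

Lemma six_family_connected n F : 0 < n -> six_family n F -> connected F.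
Proof.
move=> n_gt0; case=> [->|[->|[->|[->|[->|->]]]]]; try exact: connected_Pn;
  apply: connected_mkgraph_radius2 => [|x lt_x]; rewrite ?double_gt0 //;
  case: (eqVneq x 0) => [->|nx0]; try by constructor 1.
- by constructor 2; rewrite /nat_adj /=; lia.
- case: (leqP x n) => le_xn; first by constructor 2; rewrite /nat_adj /=; lia.
  by constructor 3; exists (x - n); rewrite /nat_adj /=; split; lia.
- case: (eqVneq x 1) => [->|nx1]; last by constructor 2; rewrite /nat_adj /=; lia.
  by constructor 3; exists 2; rewrite /nat_adj /=; split; lia.
- by constructor 2; rewrite /nat_adj /=; lia.
- by constructor 2; rewrite /nat_adj /=; lia.
Qed.

Lemma six_family_num_deg_ge2 c F : six_family (c + 3) F -> c <= num_deg_ge2 F.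
Proof.
set n := c + 3.
case=> [->|[->|[->|[->|[->|->]]]]].
- apply: (@num_deg_ge2_mkgraph_ge _ _ c succn) => [i|i j _ _ []|i lt_ic] //; first lia.
  by exists 0, i.+2; rewrite /nat_adj /=; split; lia.
- apply: (@num_deg_ge2_mkgraph_ge _ _ c succn) => [i|i j _ _ []|i lt_ic] //; first lia.
  by exists i, i.+2; rewrite /nat_adj /=; split; lia.
- apply: (@num_deg_ge2_mkgraph_ge _ _ c succn) => [i|i j _ _ []|i lt_ic] //; first lia.
  by exists 0, (i.+1 + n); rewrite /nat_adj /=; split; lia.
- apply: (@num_deg_ge2_mkgraph_ge _ _ c (addn 2)) => [i|i j _ _ /=|i lt_ic]; try lia.
  by exists 0, 1; rewrite /nat_adj /=; split; lia.
- apply: (@num_deg_ge2_mkgraph_ge _ _ c (addn 2)) => [i|i j _ _ /=|i lt_ic]; try lia.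
  by exists 0, 1; rewrite /nat_adj /=; split; lia.
- apply: (@num_deg_ge2_mkgraph_ge _ _ c (fun i => i.*2.+1)) => [i|i j _ _ /=|i lt_ic]; try lia.
  by exists 0, i.*2.+2; rewrite /nat_adj /=; split; lia.
Qed.

Lemma Hfree_famle (H1 H2 : graph -> Prop) G : famle H1 H2 -> Hfree H1 G -> Hfree H2 G.
Proof.
move=> H12 G_free F H2F F_G; have [K H1K K_F] := H12 F H2F.
exact: G_free K H1K (induced_trans K_F F_G).
Qed.

Theorem theorem1p4 (H : graph -> Prop) :
  (exists c : nat, forall G : graph,
      connected G -> Hfree H G -> num_deg_ge2 G < c)
  <->
  (exists n : nat, 0 < n /\ famle H (six_family n)).
Proof.
split=> [[c H_bound]|[n [_ H_le]]].
  have n_gt0 : 0 < c + 3 by rewrite addn3.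
  exists (c + 3); split=> // F F_six.
  apply: NNPP => no_H; have F_free : Hfree H F by move=> K HK K_F; apply: no_H; exists K.
  have := H_bound F (six_family_connected n_gt0 F_six) F_free.
  by rewrite ltnNge six_family_num_deg_ge2.
exists ((nbr_bound n).+1 ^ n).+1 => G G_conn G_free.
by rewrite ltnS num_deg_ge2_le //; apply: Hfree_famle H_le G_free.
Qed.
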